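(* Consider $\min_{\beta\in\mathbb{R}^p} f(\beta)+\sum_{j=1}^p g_j(\beta_j)$ under the following hypotheses: $f$ is convex, differentiable, with $|\nabla_j f(x+he_j)-\nabla_j f(x)|\le L_j|h|$ ($L_j>0$); each $g_j$ is proper, closed, lower bounded and $g_j/L_j+\frac{\alpha}{2}(\cdot)^2$ is convex for some $\alpha<1$; cyclic proximal coordinate descent converges to a critical point $\hat\beta$; with $\mathcal{S}=\mathrm{gsupp}(\hat\beta)=\{j_1,\dots,j_{|\mathcal{S}|}\}$, $-\nabla_j f(\hat\beta)\in\mathrm{interior}(\partial g_j(\hat\beta_j))$ for $j\notin\mathcal{S}$, $f$ is $\mathcal{C}^3$ near $\hat\beta$, $g_j$ is $\mathcal{C}^3$ near $\hat\beta_j$ for $j\in\mathcal{S}$, and $M:=\nabla^2_{\mathcal{S},\mathcal{S}}f(\hat\beta)+\nabla^2_{\mathcal{S},\mathcal{S}}g(\hat\beta)\succ0$. Let $\gamma_j=1/L_j$ and, for $s\in[|\mathcal{S}|]$, $B^{(s)}=M^{1/2}_{:s}\,\frac{\gamma_{j_s}}{1+\gamma_{j_s}g_{j_s}''(\hat\beta_{j_s})}\,(M^{1/2}_{:s})^\top$, where $M^{1/2}_{:s}$ is the $s$-th column of $M^{1/2}$. Then for all $s\in[|\mathcal{S}|]$ and all $u\in\mathbb{R}^{|\mathcal{S}|}$: if $\|(\mathrm{Id}-B^{(s)})u\|=\|u\|$, then $u\in\mathrm{Span}(M^{1/2}_{:s})^\perp$ and $(\mathrm{Id}-B^{(s)}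)u=u$.
   Context: $\partial$ is the Fréchet subdifferential, critical point means $-\nabla f(x)\in\partial g(x)$ with $g(\beta)=\sum_jg_j(\beta_j)$, and $\mathrm{gsupp}(\beta)=\{j:\partial g_j(\beta_j)\text{ is a singleton}\}$. $\nabla^2_{\mathcal{S},\mathcal{S}}g(\hat\beta)=\mathrm{diag}(g_j''(\hat\beta_j))_{j\in\mathcal{S}}$. Norms are Euclidean. Cyclic proximal coordinate descent updates, for $j=1,\dots,p$ in turn, $\beta_j\leftarrow\mathrm{prox}_{g_j/L_j}(\beta_j-\nabla_jf(\beta)/L_j)$, with $\mathrm{prox}_h(z)=\arg\min_u\frac12(u-z)^2+h(u)$. *)

From HB Require Import structures.
From mathcomp Require Import all_boot all_order all_algebra.
From mathcomp Require Import all_classical all_reals all_analysis.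
Set Implicit Arguments. Unset Strict Implicit. Unset Printing Implicit Defensive.
Import Order.TTheory GRing.Theory Num.Theory.
Import numFieldNormedType.Exports.
Local Open Scope classical_set_scope.
Local Open Scope ring_scope.

Section Defs.
Variable R : realType.

Definition ej (p : nat) (j : 'I_p) : 'rV[R]_p := delta_mx ord0 j.

Definition dotr (p : nat) (u v : 'rV[R]_p) : R := \sum_(i < p) u ord0 i * v ord0 i.
Definition enormr (p : nat) (u : 'rV[R]_p) : R := Num.sqrt (dotr u u).
Definition enormc (n : nat) (u : 'cV[R]_n) : R := Num.sqrt (\sum_(i < n) u i ord0 ^+ 2).

Definition partial (p : nat) (F : 'rV[R]_p -> R) (j : 'I_p) : 'rV[R]_p -> R :=
  fun x => derive F x (ej j).

Definition convex_fun (p : nat) (f : 'rV[R]_p -> R) : Prop :=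
  forall (x y : 'rV[R]_p) (t : R), 0 <= t <= 1 ->
    f (t *: x + (1 - t) *: y) <= t * f x + (1 - t) * f y.

Definition proper_fun (h : R -> \bar R) : Prop :=
  (exists x, h x \is a fin_num) /\ (forall x, h x != -oo%E).
(* closed = lower semicontinuous *)
Definition lsc_fun (h : R -> \bar R) : Prop :=
  forall (x : R) (a : R), (a%:E < h x)%E -> \forall y \near x, (a%:E < h y)%E.
Definition lower_bounded (h : R -> \bar R) : Prop :=
  exists m : R, forall x, (m%:E <= h x)%E.
Definition convex_efun (h : R -> \bar R) : Prop :=
  forall (x y t : R), 0 < t < 1 ->
    (h (t * x + (1 - t) * y)%R <= t%:E * h x + (1 - t)%R%:E * h y)%E.
Definition weak_cvx (h : R -> \bar R) (L alpha : R) : Prop :=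
  convex_efun (fun x => (h x * (L^-1)%:E + (alpha / 2 * x ^+ 2)%R%:E)%E).

Definition frechet1 (h : R -> \bar R) (x v : R) : Prop :=
  h x \is a fin_num /\
  forall eps : R, 0 < eps ->
    \forall y \near x, (h x + (v * (y - x) - eps * `|y - x|)%:E <= h y)%E.

Definition frechetN (p : nat) (G : 'rV[R]_p -> \bar R) (x v : 'rV[R]_p) : Prop :=
  G x \is a fin_num /\
  forall eps : R, 0 < eps ->
    \forall y \near x, (G x + (dotr v (y - x) - eps * enormr (y - x))%:E <= G y)%E.

Definition gsep (p : nat) (g : 'I_p -> R -> \bar R) (b : 'rV[R]_p) : \bar R :=
  (\sum_(j < p) g j (b ord0 j))%E.

Definition grad (p : nat) (f : 'rV[R]_p -> R) (x : 'rV[R]_p) : 'rV[R]_p :=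
  \row_j partial f j x.

Definition critical (p : nat) (f : 'rV[R]_p -> R) (g : 'I_p -> R -> \bar R)
  (x : 'rV[R]_p) : Prop := frechetN (gsep g) x (- grad f x).

Definition gsupp (p : nat) (g : 'I_p -> R -> \bar R) (b : 'rV[R]_p) : {set 'I_p} :=
  [set j | `[< exists! v, frechet1 (g j) (b ord0 j) v >]].

Definition is_prox (h : R -> \bar R) (c z u : R) : Prop :=
  forall w : R, ((1 / 2 * (u - z) ^+ 2)%:E + c%:E * h u
                 <= (1 / 2 * (w - z) ^+ 2)%:E + c%:E * h w)%E.

(* b : sequence of all inner iterates of cyclic proximal coordinate descent;
   update number t acts on coordinate (t mod p); b (k * p) is the k-th epoch iterate *)
Definition cd_seq (p : nat) (f : 'rV[R]_p -> R) (g : 'I_p -> R -> \bar R)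
  (L : 'I_p -> R) (b : nat -> 'rV[R]_p) : Prop :=
  forall (t : nat) (j : 'I_p), (t %% p)%N = j ->
    (forall k : 'I_p, k != j -> b t.+1 ord0 k = b t ord0 k) /\
    is_prox (g j) (L j)^-1 (b t ord0 j - partial f j (b t) / L j) (b t.+1 ord0 j).

Definition C3_near (p : nat) (f : 'rV[R]_p -> R) (x0 : 'rV[R]_p) : Prop :=
  exists e : R, 0 < e /\ forall x, ball x0 e x ->
    forall i j k : 'I_p,
      derivable f x (ej i) /\
      derivable (partial f i) x (ej j) /\
      derivable (partial (partial f i) j) x (ej k) /\
      {for x, continuous (partial (partial (partial f i) j) k)}.

Definition efine (h : R -> \bar R) : R -> R := fun x => fine (h x).

Definition C3_near1 (h : R -> \bar R) (x0 : R) : Prop :=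
  exists e : R, 0 < e /\ forall x, ball x0 e x ->
    h x \is a fin_num /\
    derivable (efine h) x 1 /\
    derivable (derive1 (efine h)) x 1 /\
    derivable (derive1 (derive1 (efine h))) x 1 /\
    {for x, continuous (derive1 (derive1 (derive1 (efine h))))}.

Definition g2 (h : R -> \bar R) (x : R) : R := derive1 (derive1 (efine h)) x.

Definition jS (p : nat) (S : {set 'I_p}) (s : 'I_#|S|) : 'I_p := enum_val s.

Definition Mmat (p : nat) (f : 'rV[R]_p -> R) (g : 'I_p -> R -> \bar R)
  (b : 'rV[R]_p) : 'M[R]_#|gsupp g b| :=
  \matrix_(s, t) (partial (partial f (jS t)) (jS s) b
                  + (s == t)%:R * g2 (g (jS s)) (b ord0 (jS s))).

Definition posdef (n : nat) (M : 'M[R]_n) : Prop :=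
  forall u : 'cV[R]_n, u != 0 -> 0 < (u^T *m M *m u) ord0 ord0.
Definition psd (n : nat) (M : 'M[R]_n) : Prop :=
  forall u : 'cV[R]_n, 0 <= (u^T *m M *m u) ord0 ord0.

Definition Bmat (p : nat) (g : 'I_p -> R -> \bar R) (L : 'I_p -> R) (b : 'rV[R]_p)
  (Mh : 'M[R]_#|gsupp g b|) (s : 'I_#|gsupp g b|) : 'M[R]_#|gsupp g b| :=
  let j := jS s in
  let gam := (L j)^-1 in
  (gam / (1 + gam * g2 (g j) (b ord0 j))) *: (col s Mh *m (col s Mh)^T).

End Defs.

(* B^(s) is the rank-one matrix c v v^T with v = M^{1/2}_{:s} and
   c = gamma / (1 + gamma g'') = 1 / (L_j + g''_j), where |v|^2 = M_ss =
   d_jj f + g''_j. Expanding the square,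
     |(Id - B^(s)) u|^2 = |u|^2 - c (v.u)^2 (2 - c |v|^2),
   and c |v|^2 <= 1 because the coordinatewise Lipschitz bound gives
   d_jj f <= L_j. Hence an isometric u satisfies v.u = 0, and then
   (Id - B^(s)) u = u. *)

From HB Require Import structures.
From mathcomp Require Import all_boot all_order all_algebra.
From mathcomp Require Import all_classical all_reals all_analysis.
From mathcomp Require Import ring lra.
Set Implicit Arguments. Unset Strict Implicit. Unset Printing Implicit Defensive.
Import Order.TTheory GRing.Theory Num.Theory.
Import numFieldNormedType.Exports.
Local Open Scope classical_set_scope.
Local Open Scope ring_scope.

Section ColumnVectors.
Variables (R : realType) (n : nat).
Implicit Types (u v : 'cV[R]_n) (a c : R).

Lemma sqr_enormc u : enormc u ^+ 2 = \sum_i u i 0 ^+ 2.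
Proof. by rewrite sqr_sqrtr // sumr_ge0 // => i _; exact: sqr_ge0. Qed.

Lemma sqr_enormc_subZ u v a :
  enormc (u - a *: v) ^+ 2
  = enormc u ^+ 2 - 2 * a * (v^T *m u) 0 0 + a ^+ 2 * enormc v ^+ 2.
Proof.
rewrite !sqr_enormc mxE !mulr_sumr -sumrB -big_split /=.
by apply: eq_bigr => i _; rewrite !mxE; ring.
Qed.

Lemma mulmx_rank_one_update c v u :
  (1%:M - c *: (v *m v^T)) *m u = u - (c * (v^T *m u) 0 0) *: v.
Proof.
by rewrite mulmxBl mul1mx -scalemxAl -mulmxA {1}[v^T *m u]mx11_scalar
  mul_mx_scalar scalerA.
Qed.

Lemma rank_one_update_isometry_orth c v u : 0 < c -> c * enormc v ^+ 2 < 2 ->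
  enormc ((1%:M - c *: (v *m v^T)) *m u) = enormc u -> v^T *m u = 0.
Proof.
move=> c_gt0 cv_lt2; rewrite [v^T *m u]mx11_scalar mulmx_rank_one_update.
set x := (v^T *m u) 0 0 => /(congr1 (fun y => y ^+ 2)).
rewrite sqr_enormc_subZ -/x => /eqP; rewrite -subr_eq0.
have -> : enormc u ^+ 2 - 2 * (c * x) * x + (c * x) ^+ 2 * enormc v ^+ 2
          - enormc u ^+ 2 = c * x ^+ 2 * (c * enormc v ^+ 2 - 2) by ring.
rewrite 2!mulf_eq0 gt_eqF //= sqrf_eq0 subr_eq0 (lt_eqF cv_lt2) orbF => /eqP ->.
by rewrite raddf0.
Qed.

Lemma sqr_enormc_col_sym (A : 'M[R]_n) (s : 'I_n) :
  A^T = A -> enormc (col s A) ^+ 2 = (A *m A) s s.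
Proof.
move=> AT; rewrite sqr_enormc mxE; apply: eq_bigr => i _.
by rewrite !mxE expr2 -{1}AT mxE.
Qed.

Lemma posdef_diag_gt0 (M : 'M[R]_n) (s : 'I_n) :
  posdef M -> 0 < M s s.
Proof.
move=> /(_ (delta_mx s 0)); rewrite trmx_delta -rowE -colE !mxE; apply.
by apply/eqP => /matrixP /(_ s 0) /eqP; rewrite !mxE !eqxx oner_eq0.
Qed.

End ColumnVectors.

Lemma derive_le_lipschitz (R : realType) (V : normedModType R) (F : V -> R)
    (b v : V) (L : R) :
  derivable F b v -> (forall h : R, `|F (b + h *: v) - F b| <= L * `|h|) ->
  derive F b v <= L.
Proof.
move=> dF FL; apply: limr_le => //; near=> h.
have h0 : h != 0 by near: h; exact: nbhs_dnbhs_neq.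
rewrite /= /shift (addrC (h *: v) b); apply: le_trans (ler_norm _) _.
by rewrite normrM normfV ler_pdivrMl ?normr_gt0 // mulrC.
Unshelve. all: by end_near. Qed.

Lemma step_weight_bounds (R : realFieldType) (L F G : R) :
  0 < L -> F <= L -> 0 < F + G ->
  0 < L^-1 / (1 + L^-1 * G) /\ L^-1 / (1 + L^-1 * G) * (F + G) <= 1.
Proof.
move=> L_gt0 FL FG_gt0; have LG_gt0 : 0 < L + G by lra.
have -> : L^-1 / (1 + L^-1 * G) = (L + G)^-1.
  by field; rewrite !gt_eqF.
by rewrite invr_gt0 mulrC ler_pdivrMr // mul1r; split => //; lra.
Qed.

Theorem lemma2 (R : realType) (p : nat) (f : 'rV[R]_p -> R)
  (g : 'I_p -> R -> \bar R) (L : 'I_p -> R) (alpha : R) (bhat : 'rV[R]_p)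
  (Mh : 'M[R]_#|gsupp g bhat|) :
  convex_fun f ->
  (forall x, differentiable f x) ->
  (forall j, 0 < L j) ->
  (forall (x : 'rV[R]_p) (j : 'I_p) (h : R),
      `|partial f j (x + h *: ej R j) - partial f j x| <= L j * `|h|) ->
  (forall j, proper_fun (g j)) ->
  (forall j, lsc_fun (g j)) ->
  (forall j, lower_bounded (g j)) ->
  alpha < 1 ->
  (forall j, weak_cvx (g j) (L j) alpha) ->
  (exists b : nat -> 'rV[R]_p,
      cd_seq f g L b /\ b (k * p)%N @[k --> \oo] --> bhat) ->
  critical f g bhat ->
  (forall j, j \notin gsupp g bhat ->
      interior [set v | frechet1 (g j) (bhat ord0 j) v] (- partial f j bhat)) ->
  C3_near f bhat ->
  (forall j, j \in gsupp g bhat -> C3_near1 (g j) (bhat ord0 j)) ->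
  posdef (Mmat f g bhat) ->
  (* Mh is the (unique) symmetric positive semidefinite square root M^{1/2} *)
  Mh^T = Mh -> psd Mh -> Mh *m Mh = Mmat f g bhat ->
  forall (s : 'I_#|gsupp g bhat|) (u : 'cV[R]_#|gsupp g bhat|),
    enormc ((1%:M - Bmat L Mh s) *m u) = enormc u ->
    (col s Mh)^T *m u = 0 /\ (1%:M - Bmat L Mh s) *m u = u.
Proof.
move=> _ _ L_gt0 lip _ _ _ _ _ _ _ _ [e [e_gt0 C3f]] _ M_pd MhT _ MhM s u isom.
set j := jS s; set v := col s Mh; set M := Mmat f g bhat.
have fjj_le : partial (partial f j) j bhat <= L j.
  have [_ [dfj _]] := C3f bhat (ballxx _ e_gt0) j j j.
  exact: derive_le_lipschitz dfj (lip bhat j).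
have Mss : M s s = partial (partial f j) j bhat + g2 (g j) (bhat ord0 j).
  by rewrite mxE eqxx mul1r.
have v_norm : enormc v ^+ 2 = M s s by rewrite sqr_enormc_col_sym // MhM.
have Mss_gt0 : 0 < partial (partial f j) j bhat + g2 (g j) (bhat ord0 j).
  by rewrite -Mss; exact: posdef_diag_gt0.
have [c_gt0 cM_le1] := step_weight_bounds (L_gt0 j) fjj_le Mss_gt0.
have vu : v^T *m u = 0.
  apply: rank_one_update_isometry_orth c_gt0 _ isom; rewrite v_norm Mss; lra.
by split => //; rewrite mulmx_rank_one_update vu mxE mulr0 scale0r subr0.
Qed.
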